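(* For every typed DAG task $G=(V,E,\gamma,c)$ and every platform with $M_s\ge1$ cores of each type $s\in S$, \[ len(\hat G)+\sum_{s\in S}\frac{vol_s(G)}{M_s}\;\le\;\Big(1-\frac{1}{\max_{s\in S}M_s}\Big)len(G)+\sum_{s\in S}\frac{vol_s(G)}{M_s}, \] and there exist typed DAG tasks and platforms for which this inequality is strict.
   Context: A typed DAG task is $G=(V,E,\gamma,c)$ where $(V,E)$ is a finite directed acyclic graph with a unique source and a unique sink, $S$ is a finite set of core types, $\gamma:V\to S$ gives the type of each vertex, and $c:V\to\mathbb{R}_{\ge0}$ gives the WCET of each vertex. The platform has $M_s\ge1$ cores of type $s$. $vol_s(G)=\sum_{u\in V,\gamma(u)=s}c(u)$. For a path $\pi$, $len(\pi)=\sum_{u\in\pi}c(u)$ and $len(G)$ is the maximum of $len(\pi)$ over paths of $G$. The scaled graph $\hat G$ has the same vertices, edges and types as $G$ with weights $\hat c(v)=c(v)(1-1/M_{\gamma(v)})$, and $len(\hat G)$ is its longest path length with respect to $\hat c$. (The left-hand side is the bound called NEW-B-1, the right-hand side the earlier bound called OLD-B; the paper states ''NEW-B-1 strictly dominates OLD-B''.) *)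

From HB Require Import structures.
From mathcomp Require Import all_boot all_order all_algebra.
Set Implicit Arguments. Unset Strict Implicit. Unset Printing Implicit Defensive.
Import Order.TTheory GRing.Theory Num.Theory.
Local Open Scope ring_scope.

(* Typed DAG tasks.  Vertices: a finType V; edges: a relation E on V;
   core types: a finType S; typing gamma : V -> S; WCETs c : V -> R. *)

Definition acyclic (V : finType) (E : rel V) : Prop :=
  forall u v, E u v -> ~~ connect E v u.

Definition is_source (V : finType) (E : rel V) (v : V) : bool :=
  [forall u, ~~ E u v].
Definition is_sink (V : finType) (E : rel V) (v : V) : bool :=
  [forall u, ~~ E v u].

Definition typed_dag (V : finType) (E : rel V) : Prop :=
  [/\ acyclic E,
      exists! v, is_source E v &
      exists! v, is_sink E v].

Definition is_dag_path (V : finType) (E : rel V) (p : seq V) : bool :=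
  if p is x :: q then path E x q else false.

Definition path_len (R : numDomainType) (V : finType) (c : V -> R) (p : seq V) : R :=
  \sum_(u <- p) c u.

(* In a DAG every path is duplicate-free, hence has at most #|V| vertices,
   so enumerating tuples of size <= #|V| enumerates all paths. *)
Definition dag_len (R : realDomainType) (V : finType) (E : rel V) (c : V -> R) : R :=
  \big[Num.max/0]_(n < #|V|.+1)
     \big[Num.max/0]_(t : n.-tuple V | is_dag_path E t) path_len c t.

Definition vol (R : numDomainType) (V S : finType) (gamma : V -> S) (c : V -> R) (s : S) : R :=
  \sum_(u | gamma u == s) c u.

Definition scaled_wcet (R : numFieldType) (V S : finType) (gamma : V -> S)
    (c : V -> R) (M : S -> nat) : V -> R :=
  fun v => c v * (1 - ((M (gamma v))%:R)^-1).

Definition new_b1 (R : realFieldType) (V S : finType) (E : rel V) (gamma : V -> S)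
    (c : V -> R) (M : S -> nat) : R :=
  dag_len E (scaled_wcet gamma c M) + \sum_(s : S) vol gamma c s / (M s)%:R.

Definition old_b (R : realFieldType) (V S : finType) (E : rel V) (gamma : V -> S)
    (c : V -> R) (M : S -> nat) : R :=
  (1 - ((\max_(s : S) M s)%N)%:R^-1) * dag_len E c
  + \sum_(s : S) vol gamma c s / (M s)%:R.

Definition valid_instance (R : realFieldType) (V S : finType) (E : rel V)
    (c : V -> R) (M : S -> nat) : Prop :=
  [/\ typed_dag E, forall v, 0 <= c v & forall s, (0 < M s)%N].

From HB Require Import structures.
From mathcomp Require Import all_boot all_order all_algebra.
Import Order.TTheory GRing.Theory Num.Theory.
Local Open Scope ring_scope.

(* Since 1/M_(gamma v) >= 1/max_s M_s, every scaled weight is at most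
   (1 - 1/max_s M_s) times the original one, so every path of the scaled
   graph is at most that factor times its length in G.  The inequality is
   strict for a single vertex whose type has one core while another type has
   two: the scaled graph then has length 0, while the old bound keeps half of
   len(G). *)

Section DagLen.

Variables (R : realDomainType) (V : finType) (E : rel V).

Lemma dag_len_ge0 (c : V -> R) : 0 <= dag_len E c.
Proof.
rewrite /dag_len; apply: le_trans (le_bigmax _ _ (ord0 : 'I_#|V|.+1)) => /=.
by elim/big_rec: _ => // t x _ x_ge0; rewrite le_max x_ge0 orbT.
Qed.

Lemma dag_len_le (c : V -> R) (x : R) :
  0 <= x ->
  (forall n (t : n.-tuple V), (n <= #|V|)%N -> is_dag_path E t ->
     path_len c t <= x) ->
  dag_len E c <= x.
Proof.
move=> x_ge0 path_le; apply: bigmax_le => // n _.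
by apply: bigmax_le => // t; apply: path_le; rewrite -ltnS.
Qed.

Lemma path_len_le_dag_len (c : V -> R) {n} (t : n.-tuple V) :
  (n <= #|V|)%N -> is_dag_path E t -> path_len c t <= dag_len E c.
Proof.
rewrite -ltnS => n_lt t_path.
apply: le_trans (le_bigmax _ _ (Ordinal n_lt)).
exact: (le_bigmax_cond _ (P := fun t : n.-tuple V => is_dag_path E t)).
Qed.

Lemma wcet_le_dag_len (c : V -> R) (v : V) : c v <= dag_len E c.
Proof.
have card_gt0 : (0 < #|V|)%N by apply/card_gt0P; exists v.
have := path_len_le_dag_len c [tuple v] card_gt0 erefl.
by rewrite /path_len big_seq1.
Qed.

Lemma dag_len_le_scale (c c' : V -> R) (k : R) :
  0 <= k -> (forall v, c' v <= k * c v) -> dag_len E c' <= k * dag_len E c.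
Proof.
move=> k_ge0 c'_le; apply: dag_len_le => [|n t n_le t_path].
  by rewrite mulr_ge0 // dag_len_ge0.
have path_le := ler_wpM2l k_ge0 (path_len_le_dag_len c t n_le t_path).
apply: le_trans path_le; rewrite /path_len mulr_sumr.
exact: ler_sum.
Qed.

End DagLen.

Lemma scaled_wcet_le (R : realFieldType) (V S : finType) (gamma : V -> S)
    (c : V -> R) (M : S -> nat) :
  (forall v, 0 <= c v) -> (forall s, (0 < M s)%N) ->
  forall v, scaled_wcet gamma c M v <= (1 - (\max_s M s)%N%:R^-1) * c v.
Proof.
move=> c_ge0 M_gt0 v; rewrite /scaled_wcet mulrC ler_wpM2r // lerD2l lerN2.
have M_le_max : (M (gamma v) <= \max_s M s)%N by exact: leq_bigmax.
have max_gt0 := leq_trans (M_gt0 (gamma v)) M_le_max.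
by rewrite lef_pV2 ?posrE ?ltr0n ?ler_nat.
Qed.

Lemma new_b1_le_old_b (R : realFieldType) (V S : finType) (E : rel V)
    (gamma : V -> S) (c : V -> R) (M : S -> nat) :
  (forall v, 0 <= c v) -> (forall s, (0 < M s)%N) ->
  new_b1 E gamma c M <= old_b E gamma c M.
Proof.
move=> c_ge0 M_gt0; rewrite /new_b1 /old_b lerD2r.
apply: dag_len_le_scale; last exact: scaled_wcet_le.
rewrite subr_ge0; have [-> | max_gt0] := posnP (\max_s M s).
  (* S is empty: the max is 0 and 0^-1 = 0. *)
  by rewrite invr0 ler01.
by rewrite invf_le1 ?ler1n ?ltr0n.
Qed.

Lemma typed_dag_unit : typed_dag (fun _ _ : unit => false).
Proof.
split=> //; by exists tt; split=> [|[]]; first apply/forallP.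
Qed.

Lemma new_b1_lt_old_b_unit (R : realFieldType) :
  new_b1 (fun _ _ : unit => false) (fun _ => false) (fun _ => 1 : R)
    (fun b : bool => b.+1)
  < old_b (fun _ _ : unit => false) (fun _ => false) (fun _ => 1 : R)
    (fun b : bool => b.+1).
Proof.
rewrite /new_b1 /old_b ltrD2r big_bool /=.
set E := fun _ _ : unit => false.
have scaled_len0 :
    dag_len E (scaled_wcet (fun _ => false) (fun _ => 1 : R) (fun b : bool => b.+1)) = 0.
  apply/eqP; rewrite eq_le dag_len_ge0 andbT.
  rewrite -(mul0r (dag_len E (fun _ => 1 : R))).
  by apply: dag_len_le_scale => // v; rewrite /scaled_wcet /= invr1 subrr mulr0 mul0r.
rewrite scaled_len0 mulr_gt0 ?subr_gt0 ?invf_lt1 ?ltr1n //.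
by apply: (lt_le_trans ltr01); apply: wcet_le_dag_len tt.
Qed.

Theorem corollary1 (R : realFieldType) :
  (forall (V S : finType) (E : rel V) (gamma : V -> S) (c : V -> R) (M : S -> nat),
      valid_instance E c M ->
      new_b1 E gamma c M <= old_b E gamma c M)
  /\
  (exists (V S : finType) (E : rel V) (gamma : V -> S) (c : V -> R) (M : S -> nat),
      valid_instance E c M /\
      new_b1 E gamma c M < old_b E gamma c M).
Proof.
split.
  by move=> V S E gamma c M [_ c_ge0 M_gt0]; exact: new_b1_le_old_b.
exists unit, bool, (fun _ _ => false), (fun _ => false), (fun _ => 1),
  (fun b : bool => b.+1).
split; last exact: new_b1_lt_old_b_unit.
by split; [exact: typed_dag_unit | move=> _; exact: ler01 | case].
Qed.
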